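(* For all integers $k\geq 1$, $V(F_{2k})=V(F_{2k+1})=F_{2k-2}+1$.
   Context: Fibonacci numbers: $F_0=0$, $F_1=1$, $F_{m+2}=F_{m+1}+F_m$. Standard Fibonacci words: $f_{-1}=b$, $f_0=a$, $f_{m+1}=f_mf_{m-1}$. The Fibonacci word ${\bf f}=\lim f_m=abaababa\cdots$, with prefix of length $j$ denoted ${\bf f}(0..j]$. $V(N)$ is the number of factorizations of ${\bf f}(0..N]$ as $f_m^{k_m}\cdots f_0^{k_0}$ with all $k_i\geq 0$ (into standard words $f_i$, $i\geq0$, in non-strictly decreasing order of index), counted up to leading zero exponents; $V(0)=1$. *)

From HB Require Import structures.
From mathcomp Require Import all_boot.
Set Implicit Arguments. Unset Strict Implicit. Unset Printing Implicit Defensive.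

Fixpoint fib (n : nat) : nat :=
  match n with
  | 0 => 0
  | 1 => 1
  | (m.+1 as p).+1 => fib p + fib m
  end.

Inductive letter := La | Lb.
Definition letter_eqb (x y : letter) : bool :=
  match x, y with La, La | Lb, Lb => true | _, _ => false end.
Lemma letter_eqP : Equality.axiom letter_eqb.
Proof. by case; case; constructor. Qed.
HB.instance Definition _ := hasDecEq.Build letter letter_eqP.

(* Shifted standard Fibonacci words: fw n = f_{n-1}, i.e.
   fw 0 = f_{-1} = b, fw 1 = f_0 = a, fw (n+2) = fw (n+1) ++ fw n. *)
Fixpoint fw (n : nat) : seq letter :=
  match n with
  | 0 => [:: Lb]
  | 1 => [:: La]
  | (m.+1 as p).+1 => fw p ++ fw m
  end.

Definition fword (i : nat) : seq letter := fw i.+1.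

(* Prefix f(0..N] of the infinite Fibonacci word: f_N has length F_{N+2} >= N
   and each f_m is a prefix of f_{m+1}, so this is the length-N prefix of lim f_m. *)
Definition fprefix (N : nat) : seq letter := take N (fword N).

(* The word f_m^{k_m} ... f_0^{k_0} for ks = [:: k_0; k_1; ...; k_m]. *)
Definition fact_word (ks : seq nat) : seq letter :=
  flatten (rev [seq flatten (nseq ik.2 (fword ik.1))
               | ik <- zip (iota 0 (size ks)) ks]).

(* Factorizations counted up to leading zero exponents: normalize by requiring
   the exponent list to have no trailing zero (k_m <> 0), or to be empty. *)
Definition is_factorization (N : nat) (ks : seq nat) : Prop :=
  last 1 ks <> 0 /\ fact_word ks = fprefix N.

(* V(N) = c : the set of factorizations of f(0..N] is finite of cardinality c. *)
Definition V_is (N c : nat) : Prop :=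
  exists s : seq (seq nat),
    [/\ uniq s, (forall ks, ks \in s <-> is_factorization N ks) & size s = c].

Example fw_test : fword 3 = [:: La; Lb; La; La; Lb]. Proof. by []. Qed.
Example fib_test : fib 6 = 8. Proof. by []. Qed.

(* Let phi be the Fibonacci morphism a |-> ab, b |-> a, so that f_(i+1) = phi f_i and
   f_m^k_m ... f_1^k_1 f_0^k_0 = phi (f_(m-1)^k_m ... f_0^k_1) a^k_0.  As phi is injective,
   the factorizations of a nonempty w are the k :: ks with w = phi v a^k and ks a
   factorization of v.  Reading off the last letters gives V(phi (v a)) = V(v a),
   V(phi (v b)) = V(v b) + V(phi v) and V(x b b) = 0, since phi never produces bb.
   Writing f_(2j+3) = Y aab, the four counts V(Y aab), V(Y aa), V(Y a), V(Y ab) are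
   transformed linearly when Y is replaced by phi (phi Y) abaab, the corresponding word
   for f_(2j+5); by induction they are F_(2j+2) + 1, F_(2j+3), F_(2j+3), F_(2j+2).
   The prefixes of lengths F_(2k) and F_(2k+1) are f_(2k-2) = phi (Y aab) (for k >= 3)
   and f_(2k-1) = phi f_(2k-2); as f_(2k-2) ends with a, both have F_(2k-2) + 1
   factorizations. *)

From mathcomp Require Import all_boot zify.

Section Cardinality.

Context {T : eqType}.
Implicit Types (P Q : T -> Prop) (f : T -> T).

Definition card_is P n :=
  exists s : seq T, [/\ uniq s, forall x, x \in s <-> P x & size s = n].

Lemma card_is_ext {P Q n} : (forall x, P x <-> Q x) -> card_is P n -> card_is Q n.
Proof. by move=> PQ [s [Us Ms Ss]]; exists s; split=> // x; apply: iff_trans (PQ x). Qed.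

Lemma card_is0 {P} : (forall x, ~ P x) -> card_is P 0.
Proof. by move=> nP; exists [::]; split=> // x; split=> // /nP. Qed.

Lemma card_is_image f {P n} :
    (forall x y, P x -> P y -> f x = f y -> x = y) ->
  card_is P n -> card_is (fun y => exists2 x, P x & y = f x) n.
Proof.
move=> f_inj [s [Us Ms <-]]; exists (map f s); split; last by rewrite size_map.
- by rewrite map_inj_in_uniq // => x y /Ms Px /Ms Py; apply: f_inj.
- by move=> y; split=> [/mapP [x /Ms Px ->] | [x /Ms sx ->]]; [exists x | apply: map_f].
Qed.

Lemma card_is_union {P Q m n} : (forall x, P x -> Q x -> False) ->
  card_is P m -> card_is Q n -> card_is (fun x => P x \/ Q x) (m + n).
Proof.
move=> PQ [s1 [U1 M1 <-]] [s2 [U2 M2 <-]]; exists (s1 ++ s2); split.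
- rewrite cat_uniq U1 U2 andbT /=; apply/hasPn => x /M2 Qx.
  by apply/negP => /M1 Px; apply: PQ Px Qx.
- move=> x; rewrite mem_cat; split=> [/orP [/M1 ? | /M2 ?] | [/M1 -> | /M2 ->]];
  by [left | right | rewrite ?orbT].
- by rewrite size_cat.
Qed.

End Cardinality.

Fixpoint phi (w : seq letter) : seq letter :=
  match w with
  | [::] => [::]
  | La :: w' => La :: Lb :: phi w'
  | Lb :: w' => La :: phi w'
  end.

Lemma phi_cat u v : phi (u ++ v) = phi u ++ phi v.
Proof. by elim: u => [|[] u IH] //=; rewrite IH. Qed.

Lemma phi_flatten ws : phi (flatten ws) = flatten (map phi ws).
Proof. by elim: ws => [|w ws IH] //=; rewrite phi_cat IH. Qed.

Lemma phi_eq_nil w : phi w = [::] -> w = [::].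
Proof. by case: w => [|[] w]. Qed.

Lemma phi_neq_b_cons w s : phi w <> Lb :: s.
Proof. by case: w => [|[] w]. Qed.

Lemma phi_inj : injective phi.
Proof.
elim=> [|[] u IH] [|[] v] //= [].
- by move/IH ->.
- by move/esym/phi_neq_b_cons.
- by move/phi_neq_b_cons.
- by move/IH ->.
Qed.

Lemma phi_neq_cat_bb w x : phi w <> x ++ [:: Lb; Lb].
Proof.
case/lastP: w => [|w []]; first by case: x.
all: rewrite -cats1 phi_cat => /(congr1 (fun s => take 2 (rev s))).
all: by rewrite !rev_cat.
Qed.

Lemma fwSS n : fw n.+2 = fw n.+1 ++ fw n. Proof. by []. Qed.

Lemma phi_fw n : phi (fw n) = fw n.+1.
Proof.
suff: phi (fw n) = fw n.+1 /\ phi (fw n.+1) = fw n.+2 by case.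
by elim: n => [|n [IHn IHn1]] //; rewrite fwSS phi_cat IHn IHn1.
Qed.

Lemma fw_odd_cat_a k : exists u, fw k.*2.+1 = u ++ [:: La].
Proof.
elim: k => [|k [u fw_u]]; first by exists [::].
by exists (fw k.*2.+2 ++ u); rewrite doubleS fwSS fw_u catA.
Qed.

Lemma size_fw n : size (fw n) = fib n.+1.
Proof.
suff: size (fw n) = fib n.+1 /\ size (fw n.+1) = fib n.+2 by case.
by elim: n => [|n [IHn IHn1]] //; rewrite fwSS size_cat IHn IHn1.
Qed.

Lemma fw_prefix {n} m : 0 < n -> exists r, fw (n + m) = fw n ++ r.
Proof.
move=> n_gt0; elim: m => [|m [r fw_r]]; first by exists [::]; rewrite addn0 cats0.
by case: n n_gt0 fw_r => // n _ fw_r; exists (r ++ fw (n + m)); rewrite addnS fwSS fw_r catA.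
Qed.

Lemma fibSS n : fib n.+2 = fib n.+1 + fib n. Proof. by []. Qed.

Lemma fib_gt0 n : 0 < fib n.+1.
Proof. by elim: n => // n IHn; rewrite fibSS addn_gt0 IHn. Qed.

Lemma leq_fib n : n <= fib n.+1.
Proof.
elim: n => // -[|n] IHn //; rewrite fibSS.
by have := fib_gt0 n; lia.
Qed.

Lemma fprefix_fib n : 0 < n -> fprefix (fib n.+1) = fw n.
Proof.
move=> n_gt0; have [r fw_r] := fw_prefix ((fib n.+1).+1 - n) n_gt0.
rewrite /fprefix /fword -(subnKC (leqW (leq_fib n))) fw_r.
by rewrite take_size_cat ?size_fw.
Qed.

Lemma nseqS_rcons (U : Type) k (x : U) : nseq k.+1 x = rcons (nseq k x) x.
Proof. by rewrite -addn1 nseqD cats1. Qed.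

Lemma map_zip_iotaS (U : Type) (f : nat * nat -> U) i ks :
  [seq f ik | ik <- zip (iota i.+1 (size ks)) ks] =
  [seq f (ik.1.+1, ik.2) | ik <- zip (iota i (size ks)) ks].
Proof. by elim: ks i => //= k ks IH i; rewrite IH. Qed.

Lemma fact_word_cons k ks : fact_word (k :: ks) = phi (fact_word ks) ++ nseq k La.
Proof.
rewrite /fact_word /= rev_cons flatten_rcons -(map_nseq _ (fun x => [:: x])).
rewrite flatten_seq1 map_zip_iotaS phi_flatten map_rev -map_comp; congr (flatten (rev _) ++ _).
by apply: eq_map => -[i m]; rewrite /= phi_flatten map_nseq /fword phi_fw.
Qed.

(* [V_is N c] unfolds to [card_is (factorization (fprefix N)) c]. *)
Definition factorization (w : seq letter) (ks : seq nat) : Prop :=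
  last 1 ks <> 0 /\ fact_word ks = w.

Definition incr_head (ks : seq nat) : seq nat :=
  if ks is k :: ks' then k.+1 :: ks' else [:: 1].

Lemma fact_word_incr_head ks : fact_word (incr_head ks) = rcons (fact_word ks) La.
Proof. by case: ks => [|k ks]; rewrite !fact_word_cons ?nseqS_rcons ?rcons_cat. Qed.

Lemma incr_head_inj ks ks' : last 1 ks <> 0 -> last 1 ks' <> 0 ->
  incr_head ks = incr_head ks' -> ks = ks'.
Proof.
case: ks ks' => [|k ks] [|k' ks'] //= last_ks last_ks' [] => [k'0 ks'0 | k0 ks0 | -> ->] //.
all: by subst; exfalso; first [apply: last_ks' | apply: last_ks].
Qed.

Lemma factorization_incr_head w ks :
  factorization w ks -> factorization (rcons w La) (incr_head ks).
Proof.
case=> last_ks <-; split; last exact: fact_word_incr_head.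
by case: ks last_ks => [|k [|k' ks]].
Qed.

Lemma factorization_rcons_a w k ks : factorization (rcons w La) (k.+1 :: ks) ->
  exists2 ks', factorization w ks' & k.+1 :: ks = incr_head ks'.
Proof.
case=> last_ks; rewrite fact_word_cons nseqS_rcons -rcons_cat => /rcons_inj [fw_k].
move: fw_k; rewrite -fact_word_cons; case: k ks last_ks => [|k] [|k' ks] last_ks <-.
- by exists [::].
- by exists [:: 0, k' & ks].
- by exists [:: k.+1].
- by exists [:: k.+1, k' & ks].
Qed.

Lemma factorization_rcons_b {x k ks} : factorization (rcons x Lb) (k :: ks) -> k = 0.
Proof.
case: k => // k [_]; rewrite fact_word_cons nseqS_rcons -rcons_cat.
by move/(congr1 (last La)); rewrite !last_rcons.
Qed.

Lemma factorization_cons0 w ks : w <> [::] ->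
  factorization (phi w) (0 :: ks) <-> factorization w ks.
Proof.
move=> w_ne0; rewrite /factorization fact_word_cons cats0.
split=> [[last_ks /phi_inj fw_ks] | [last_ks fw_ks]]; last first.
  by split; [case: ks fw_ks last_ks => // /esym | rewrite fw_ks].
by split=> //; case: ks last_ks fw_ks.
Qed.

Lemma factorization_nil ks : factorization [::] ks <-> ks = [::].
Proof.
split=> [[last_ks fw_ks] | -> //]; suff: all (pred1 0) ks.
  by case: ks last_ks {fw_ks} => // k ks last_ks /allP/(_ _ (mem_last k ks))/eqP.
elim: ks {last_ks} fw_ks => //= k ks IH; rewrite fact_word_cons.
by case: k => [|k] /=; [rewrite cats0 => /phi_eq_nil/IH | case: (phi _)].
Qed.

Lemma card_fact_nil : card_is (factorization [::]) 1.
Proof.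
exists [:: [::]]; split=> // ks; rewrite inE factorization_nil.
by split=> [/eqP | ->].
Qed.

(* Here and in [card_fact_phi_b] and [card_fact_bb] the prefix is split as [u ++ s], so
   that for a concrete [s] the lemmas apply by conversion to words of the shapes
   [u ++ letters] and [phi u ++ letters]. *)
Lemma card_fact_phi_a u s {n} :
  card_is (factorization (u ++ s ++ [:: La])) n ->
  card_is (factorization (phi u ++ phi (s ++ [:: La]))) n.
Proof.
rewrite -phi_cat; set w := u ++ _.
have w_ne0 : w <> [::] by rewrite /w catA; case: (u ++ s).
have phi_w : phi w = rcons (phi (u ++ s) ++ [:: La]) Lb.
  by rewrite /w catA phi_cat -cats1 -catA.
move=> card_w; apply: card_is_ext (card_is_image (cons 0) _ card_w); last by move=> ? ? _ _ [].
move=> ks; split=> [[ks' fact_ks' ->] | fact_ks]; first exact/factorization_cons0.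
case: ks fact_ks => [[_ /esym/phi_eq_nil] // | k ks fact_ks].
have k0 : k = 0 by move: fact_ks; rewrite phi_w => /factorization_rcons_b.
by rewrite k0 in fact_ks *; exists ks => //; apply/factorization_cons0.
Qed.

Lemma card_fact_phi_b u s {m n} :
  card_is (factorization (u ++ s ++ [:: Lb])) n ->
  card_is (factorization (phi u ++ phi s)) m ->
  card_is (factorization (phi u ++ phi (s ++ [:: Lb]))) (n + m).
Proof.
rewrite -!phi_cat catA; set w := u ++ s; have wb_ne0 : w ++ [:: Lb] <> [::] by case: w.
have phi_wb : phi (w ++ [:: Lb]) = rcons (phi w) La by rewrite phi_cat cats1.
move=> card_wb card_w.
apply: card_is_ext (card_is_union _ (card_is_image (cons 0) _ card_wb)
                                   (card_is_image incr_head _ card_w)).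
- move=> ks; rewrite phi_wb; split=> [[[ks' fact_ks' ->] | [ks' fact_ks' ->]] | fact_ks].
  + by rewrite -phi_wb; apply/factorization_cons0.
  + exact: factorization_incr_head.
  + case: ks fact_ks => [[_ /(congr1 size)] | [|k] ks fact_ks]; first by rewrite size_rcons.
      by left; exists ks => //; apply/factorization_cons0 => //; rewrite phi_wb.
    by right; apply: factorization_rcons_a.
- by move=> _ [ks _ ->] [[|k ks'] _].
- by move=> ? ? _ _ [].
- move=> ks ks' [last_ks _] [last_ks' _]; exact: incr_head_inj.
Qed.

Lemma card_fact_rcons_b_not_phi x : (forall v, phi v <> rcons x Lb) ->
  card_is (factorization (rcons x Lb)) 0.
Proof.
move=> x_notin; apply: card_is0 => -[[_ /(congr1 size)] | k ks fact_ks].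
  by rewrite size_rcons.
move: (fact_ks); rewrite (factorization_rcons_b fact_ks) => -[_].
by rewrite fact_word_cons cats0; apply: x_notin.
Qed.

Lemma card_fact_b : card_is (factorization [:: Lb]) 0.
Proof. by apply: (card_fact_rcons_b_not_phi [::]) => v; apply: phi_neq_b_cons. Qed.

Lemma card_fact_bb u s : card_is (factorization (u ++ s ++ [:: Lb; Lb])) 0.
Proof.
have -> : u ++ s ++ [:: Lb; Lb] = rcons (u ++ s ++ [:: Lb]) Lb by rewrite -cats1 -!catA.
by apply: card_fact_rcons_b_not_phi => v; rewrite -cats1 -!catA catA; apply: phi_neq_cat_bb.
Qed.

Lemma card_fact_a : card_is (factorization [:: La]) 1.
Proof. exact: (card_fact_phi_b [::] [::] card_fact_b card_fact_nil). Qed.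

Lemma card_fact_ab : card_is (factorization [:: La; Lb]) 1.
Proof. exact: (card_fact_phi_a [::] [::] card_fact_a). Qed.

Lemma card_fact_aba : card_is (factorization [:: La; Lb; La]) 2.
Proof. exact: (card_fact_phi_b [::] [:: La] card_fact_ab card_fact_ab). Qed.

Definition suffix_counts Y (a b c e : nat) :=
  [/\ card_is (factorization (Y ++ [:: La; La; Lb])) a,
      card_is (factorization (Y ++ [:: La; La])) b,
      card_is (factorization (Y ++ [:: La])) c &
      card_is (factorization (Y ++ [:: La; Lb])) e].

Lemma suffix_counts_ab : suffix_counts [:: La; Lb] 2 2 2 1.
Proof.
have card_aa : card_is (factorization [:: La; La]) 1.
  exact: (card_fact_phi_b [::] [:: Lb] (card_fact_bb [::] [::]) card_fact_a).
split.
- exact: (card_fact_phi_a [::] [:: La; Lb] card_fact_aba).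
- exact: (card_fact_phi_b [::] [:: La; Lb] (card_fact_bb [::] [:: La]) card_fact_aba).
- exact: card_fact_aba.
- exact: (card_fact_phi_a [::] [:: La] card_aa).
Qed.

Lemma suffix_counts_phi {Y a b c e} : suffix_counts Y a b c e ->
  [/\ card_is (factorization (phi Y ++ [:: La; Lb; La; Lb; La])) (a + b),
      card_is (factorization (phi Y ++ [:: La; Lb; La; Lb])) b,
      card_is (factorization (phi Y ++ [:: La; Lb; La])) (e + c) &
      card_is (factorization (phi Y ++ [:: La; Lb; La; La])) (e + c)].
Proof.
case=> card_aab card_aa card_a card_ab.
have card_abab := card_fact_phi_a Y [:: La] card_aa.
have card_aba := card_fact_phi_b Y [:: La] card_ab (card_fact_phi_a Y [::] card_a).
split=> //.
- exact: (card_fact_phi_b Y [:: La; La] card_aab card_abab).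
- exact: (card_fact_phi_b Y [:: La; Lb] (card_fact_bb Y [:: La]) card_aba).
Qed.

Lemma suffix_counts_phi2 {Y a b c e} : suffix_counts Y a b c e ->
  suffix_counts (phi (phi Y) ++ [:: La; Lb; La; La; Lb])
    (a + b) (b + (e + c)) (b + (e + c)) (e + c).
Proof.
case/suffix_counts_phi; set Z := phi Y => card_ababa card_abab card_aba card_abaa.
have card_abaab := card_fact_phi_a Z [:: La; Lb] card_aba.
have card_abaaba := card_fact_phi_b Z [:: La; Lb; La] card_abab card_abaab.
rewrite /suffix_counts -!catA; split.
- exact: (card_fact_phi_a Z [:: La; Lb; La; Lb] card_ababa).
- exact: (card_fact_phi_b Z [:: La; Lb; La; Lb] (card_fact_bb Z [:: La; Lb; La])
                          card_abaaba).
- exact: card_abaaba.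
- exact: (card_fact_phi_a Z [:: La; Lb; La] card_abaa).
Qed.

Lemma fw_suffix_counts j : exists Y, fw j.*2.+4 = Y ++ [:: La; La; Lb] /\
  suffix_counts Y (fib j.*2.+2 + 1) (fib j.*2.+3) (fib j.*2.+3) (fib j.*2.+2).
Proof.
elim: j => [|j [Y [fw_Y counts_Y]]].
  by exists [:: La; Lb]; split; last exact: suffix_counts_ab.
exists (phi (phi Y) ++ [:: La; Lb; La; La; Lb]); split.
  by rewrite doubleS -2!phi_fw fw_Y !phi_cat -catA.
rewrite doubleS.
have -> : fib j.*2.+4 + 1 = fib j.*2.+2 + 1 + fib j.*2.+3 by rewrite fibSS; lia.
have -> : fib j.*2.+4.+1 = fib j.*2.+3 + (fib j.*2.+2 + fib j.*2.+3) by rewrite !fibSS; lia.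
have -> : fib j.*2.+4 = fib j.*2.+2 + fib j.*2.+3 by rewrite fibSS; lia.
exact: suffix_counts_phi2.
Qed.

Lemma card_fact_fw_odd k : card_is (factorization (fw k.*2.+1)) (fib k.*2 + 1).
Proof.
case: k => [|[|j]]; [exact: card_fact_a | exact: card_fact_aba |].
have [Y [fw_Y counts_Y]] := fw_suffix_counts j.
have [card_ababa _ _ _] := suffix_counts_phi counts_Y.
rewrite !doubleS -phi_fw fw_Y phi_cat.
have -> : fib j.*2.+4 + 1 = fib j.*2.+2 + 1 + fib j.*2.+3 by rewrite fibSS; lia.
exact: card_ababa.
Qed.

Lemma card_fact_fw_even k : card_is (factorization (fw k.*2.+2)) (fib k.*2 + 1).
Proof.
have [u fw_u] := fw_odd_cat_a k.
rewrite -phi_fw fw_u phi_cat; apply: (card_fact_phi_a u [::]).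
by rewrite -fw_u; apply: card_fact_fw_odd.
Qed.

Theorem corollary2 (k : nat) : 1 <= k ->
  V_is (fib (2 * k)) (fib (2 * k - 2) + 1) /\
  V_is (fib (2 * k + 1)) (fib (2 * k - 2) + 1).
Proof.
case: k => // k _.
have -> : 2 * k.+1 = (k.*2.+1).+1 by lia.
have -> : (k.*2.+1).+1 + 1 = (k.*2.+2).+1 by lia.
have -> : (k.*2.+1).+1 - 2 = k.*2 by lia.
split.
- change (card_is (factorization (fprefix (fib (k.*2.+1).+1))) (fib k.*2 + 1)).
  by rewrite fprefix_fib //; apply: card_fact_fw_odd.
- change (card_is (factorization (fprefix (fib (k.*2.+2).+1))) (fib k.*2 + 1)).
  by rewrite fprefix_fib //; apply: card_fact_fw_even.
Qed.
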